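(* For $n\ge 1$, the number of edges of $\mathcal{SP}_L(IS_n)$ is $$\frac12\left((2^n-1)^2-(3^n-2^n)\right).$$
   Context: $IS_n$ is the set of all partial injective maps of an $n$-element set $X$, with composition written left to right ($\alpha\beta$ means first $\alpha$, then $\beta$); its zero is the empty map. For $a\in IS_n$, $S^1a=\{sa:s\in IS_n\}\cup\{a\}$. $\mathcal{P}_L(IS_n)$ is the simple graph on the non-empty partial injections with distinct $a,b$ adjacent iff $S^1a\cap S^1b$ contains a non-empty map. $L_a$ is the Green $\mathcal{L}$-class of $a$ ($a\,\mathcal{L}\,b$ iff $S^1a=S^1b$). $\mathcal{SP}_L(IS_n)$ is the simple graph with vertex set $\{L_a: a \text{ non-empty}\}$, distinct $L_a,L_b$ adjacent iff $a,b$ are adjacent in $\mathcal{P}_L(IS_n)$. *)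

From mathcomp Require Import all_boot all_order all_algebra.
Set Implicit Arguments. Unset Strict Implicit. Unset Printing Implicit Defensive.

(* X = 'I_n.  A partial map of X is encoded as f : {ffun 'I_n -> option 'I_n},
   with f x = None meaning x is not in the domain. *)
Definition pmap (n : nat) := {ffun 'I_n -> option 'I_n}.

Definition is_pinj n (f : pmap n) : bool :=
  [forall x, forall y, ((f x != None) && (f x == f y)) ==> (x == y)].

Definition ISn n : {set pmap n} := [set f | is_pinj f].

Definition pzero n : pmap n := [ffun => None].

(* composition written left to right: pcomp a b = "a b" = first a, then b *)
Definition pcomp n (a b : pmap n) : pmap n := [ffun x => obind b (a x)].

Definition S1 n (a : pmap n) : {set pmap n} :=
  [set pcomp s a | s in ISn n] :|: [set a].

Definition PLadj n (a b : pmap n) : bool :=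
  (a != b) && [exists c in S1 a :&: S1 b, c != pzero n].

Definition Lclass n (a : pmap n) : {set pmap n} :=
  [set b in ISn n | S1 b == S1 a].

Definition ISn_nz n : {set pmap n} := ISn n :\ pzero n.

Definition SPverts n : {set {set pmap n}} := [set Lclass a | a in ISn_nz n].

Definition SPadj n (C D : {set pmap n}) : bool :=
  (C != D) && [exists a in ISn_nz n, exists b in ISn_nz n,
     [&& C == Lclass a, D == Lclass b & PLadj a b]].

Definition SPedges n : {set {set {set pmap n}}} :=
  [set E | [exists C in SPverts n, exists D in SPverts n,
     (E == [set C; D]) && SPadj C D]].

From Pilot Require Import Defs.
From mathcomp Require Import all_boot all_order all_algebra.
From mathcomp Require Import lra.
Set Implicit Arguments. Unset Strict Implicit. Unset Printing Implicit Defensive.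

(* A partial injection c lies in S^1 a exactly when im c is contained in im a,
   so the L-class of a non-empty a is determined by its image, a non-empty
   subset of X, and two such classes are adjacent iff their images are distinct
   and meet.  Edges of SP_L(IS_n) are therefore unordered pairs of distinct
   subsets of X with non-empty intersection.  There are 4^n - 3^n ordered pairs
   of subsets that meet (3^n pairs are disjoint, by colouring each point "in A",
   "in B" or "in neither"), 2^n - 1 of them lie on the diagonal, and each edge
   is counted twice among the remaining ones. *)

Lemma eq_set2 (T : finType) (x1 x2 y1 y2 : T) : [set x1; x2] = [set y1; y2] ->
  (x1 = y1 /\ x2 = y2) \/ (x1 = y2 /\ x2 = y1).
Proof.
move=> E.
have h1 : x1 \in [set y1; y2] by rewrite -E set21.
have h2 : x2 \in [set y1; y2] by rewrite -E set22.
have h3 : y1 \in [set x1; x2] by rewrite E set21.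
have h4 : y2 \in [set x1; x2] by rewrite E set22.
move: h1 h2 h3 h4; rewrite !inE.
by do 4 case/orP=> /eqP ?; subst; auto.
Qed.

Lemma card_imset_set2 (T U : finType) (f : T -> U) (P : {set T * T}) :
  injective f -> {in P, forall p, p.1 != p.2} -> {in P, forall p, (p.2, p.1) \in P} ->
  #|P| = 2 * #|[set [set f p.1; f p.2] | p in P]|.
Proof.
move=> inj_f irrP symP.
rewrite -sum1_card (partition_big_imset (fun p => [set f p.1; f p.2])) /=.
rewrite -sum1_card big_distrr /=; apply: eq_bigr => _ /imsetP [[x y] Pxy ->].
rewrite muln1 (eq_bigl (mem [set (x, y); (y, x)])) ?sum1_card.
  by rewrite cards2 xpair_eqE negb_and (irrP _ Pxy).
move=> -[u v]; rewrite !inE /=; apply/andP/orP.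
  by case=> _ /eqP /eq_set2 [[/inj_f -> /inj_f ->] | [/inj_f -> /inj_f ->]]; [left | right].
case=> /eqP [-> ->]; first by rewrite Pxy.
by rewrite (symP _ Pxy) setUC.
Qed.

Section PartialInjections.
Variable n : nat.
Implicit Types (a b c s : Defs.pmap n) (A B : {set 'I_n}).

Definition pimg a : {set 'I_n} := [set y | [exists x, a x == Some y]].

Definition pid A : Defs.pmap n := [ffun x => if x \in A then Some x else None].

Lemma is_pinjP a : reflect (forall x y, a x != None -> a x = a y -> x = y) (a \in ISn n).
Proof.
rewrite inE; apply: (iffP forallP) => [inj_a x y ax axy | inj_a x].
  by move/forallP/(_ y)/implyP: (inj_a x) => H; apply/eqP/H; rewrite ax axy eqxx.
by apply/forallP => y; apply/implyP => /andP[ax /eqP axy]; apply/eqP/inj_a.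
Qed.

Lemma pimgP a y : reflect (exists x, a x = Some y) (y \in pimg a).
Proof.
rewrite inE; apply: (iffP existsP) => [[x /eqP] | [x ax]]; first by exists x.
by exists x; rewrite ax.
Qed.

Lemma pcomp_pinj s a : s \in ISn n -> a \in ISn n -> Defs.pcomp s a \in ISn n.
Proof.
move=> /is_pinjP inj_s /is_pinjP inj_a; apply/is_pinjP => x y; rewrite !ffunE.
case sx: (s x) => [u|] //=; case sy: (s y) => [v|] //= au auv; last by rewrite auv in au.
by apply: inj_s; rewrite ?sx ?sy //; congr Some; apply: inj_a.
Qed.

Lemma pimg_pcomp s a : pimg (Defs.pcomp s a) \subset pimg a.
Proof.
apply/subsetP => y /pimgP [x]; rewrite ffunE; case: (s x) => //= u au.
by apply/pimgP; exists u.
Qed.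

Lemma S1_subset a : a \in ISn n -> S1 a \subset ISn n.
Proof.
move=> Ia; apply/subsetP => c; rewrite inE => /orP[/imsetP [s Is ->] | /set1P -> //].
exact: pcomp_pinj.
Qed.

(* The factor s with c = s a sends x to the unique preimage under a of c x. *)
Lemma mem_S1 a c : a \in ISn n -> c \in ISn n -> (c \in S1 a) = (pimg c \subset pimg a).
Proof.
move=> Ia Ic; apply/idP/idP.
  by rewrite inE => /orP[/imsetP [s _ ->] | /set1P ->]; rewrite ?pimg_pcomp.
move: Ia Ic => /is_pinjP inj_a /is_pinjP inj_c /subsetP sub_ca.
pose s : Defs.pmap n := [ffun x => obind (fun y => [pick z | a z == Some y]) (c x)].
have s_pre x y : c x = Some y -> exists2 z, s x = Some z & a z = Some y.
  move=> cx; rewrite /s ffunE cx /=; case: pickP => [z /eqP az | no_pre]; first by exists z.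
  have /pimgP [z az] : y \in pimg a by apply: sub_ca; apply/pimgP; exists x.
  by move: (no_pre z); rewrite az eqxx.
have s_none x : c x = None -> s x = None by move=> cx; rewrite /s ffunE cx.
have Is : s \in ISn n.
  apply/is_pinjP => x x'; case cx: (c x) => [y|]; last by rewrite s_none.
  case: (s_pre x y cx) => z -> az _.
  case cx': (c x') => [y'|]; last by rewrite s_none.
  case: (s_pre x' y' cx') => z' -> az' [zz']; subst z'.
  by apply: inj_c; rewrite cx // cx' -az -az'.
have -> : c = Defs.pcomp s a.
  apply/ffunP => x; rewrite ffunE; case cx: (c x) => [y|]; last by rewrite s_none.
  by case: (s_pre x y cx) => z ->.
by rewrite inE; apply/orP; left; apply/imsetP; exists s.
Qed.

Lemma pid_pinj A : pid A \in ISn n.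
Proof.
apply/is_pinjP => x y; rewrite !ffunE.
by case: (x \in A) => //; case: (y \in A) => // _ [].
Qed.

Lemma pimg_pid A : pimg (pid A) = A.
Proof.
apply/setP => y; apply/pimgP/idP => [[x] | Ay]; last by exists y; rewrite ffunE Ay.
by rewrite ffunE; case: ifP => // Ax [<-].
Qed.

Lemma pimg_eq0 c : (pimg c == set0) = (c == pzero n).
Proof.
apply/eqP/eqP => [c0 | ->].
  apply/ffunP => x; rewrite ffunE; case cx: (c x) => [y|] //.
  have : y \in pimg c by apply/pimgP; exists x.
  by rewrite c0 inE.
by apply/setP => y; rewrite in_set0; apply/negbTE/negP => /pimgP [x]; rewrite ffunE.
Qed.

Lemma pid_nz A : A != set0 -> pid A \in ISn_nz n.
Proof. by move=> A0; rewrite in_setD1 pid_pinj -pimg_eq0 pimg_pid A0. Qed.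

Lemma S1_self a : a \in S1 a.
Proof. by rewrite !inE eqxx orbT. Qed.

Lemma LclassE a : a \in ISn n -> Lclass a = [set c in ISn n | pimg c == pimg a].
Proof.
move=> Ia; apply/setP => c; rewrite !inE; case Ic: (is_pinj c) => //=.
have {}Ic : c \in ISn n by rewrite inE.
have S1I d b : b \in ISn n -> d \in S1 b -> d \in ISn n.
  by move=> Ib; apply/subsetP/S1_subset.
apply/eqP/eqP => [Sca | pca].
  by apply/eqP; rewrite eqEsubset -!mem_S1 // Sca S1_self -Sca S1_self.
apply/setP => d; apply/idP/idP => Sd.
  by rewrite mem_S1 ?(S1I d c) // -pca -mem_S1 ?(S1I d c).
by rewrite mem_S1 ?(S1I d a) // pca -mem_S1 ?(S1I d a).
Qed.

Definition Limg A := Lclass (pid A).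

Lemma mem_Limg A c : (c \in Limg A) = (c \in ISn n) && (pimg c == A).
Proof. by rewrite /Limg LclassE ?pid_pinj // pimg_pid in_set. Qed.

Lemma Lclass_pimg a : a \in ISn n -> Lclass a = Limg (pimg a).
Proof. by move=> Ia; apply/setP => c; rewrite mem_Limg LclassE // in_set. Qed.

Lemma Limg_inj : injective Limg.
Proof.
move=> A B eqAB; apply/eqP; move: (mem_Limg B (pid A)).
by rewrite -eqAB !mem_Limg pid_pinj pimg_pid eqxx.
Qed.

(* The common non-empty element of S^1 a and S^1 b can be taken of rank one. *)
Lemma PLadjE a b : a \in ISn n -> b \in ISn n ->
  PLadj a b = (a != b) && (pimg a :&: pimg b != set0).
Proof.
move=> Ia Ib; congr (_ && _); apply/existsP/set0Pn.
  case=> c /andP[]; rewrite in_setI => /andP[Sac Sbc].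
  rewrite -pimg_eq0 => /set0Pn [y cy]; exists y.
  have Ic : c \in ISn n by apply: (subsetP (S1_subset Ia)).
  by rewrite in_setI (subsetP _ _ cy) -?mem_S1 // (subsetP _ _ cy) -?mem_S1.
case=> y; rewrite in_setI => /andP[ay byy]; exists (pid [set y]).
rewrite in_setI !mem_S1 ?pid_pinj // pimg_pid !sub1set ay byy /=.
by rewrite -pimg_eq0 pimg_pid; apply/set0Pn; exists y; rewrite set11.
Qed.

Definition overlap_pairs : {set {set 'I_n} * {set 'I_n}} :=
  [set p | (p.1 != p.2) && (p.1 :&: p.2 != set0)].

Lemma SPedgesE : SPedges n = [set [set Limg p.1; Limg p.2] | p in overlap_pairs].
Proof.
apply/setP => E; apply/idP/imsetP.
  rewrite inE => /existsP [C /andP [_ /existsP [D /andP [_ /andP [/eqP -> adjCD]]]]].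
  case/andP: adjCD => neCD /existsP [a /andP [nza /existsP [b /andP [nzb]]]].
  case/and3P => /eqP eC /eqP eD adj_ab.
  move: nza nzb; rewrite !in_setD1 => /andP [_ Ia] /andP [_ Ib].
  rewrite eC eD !Lclass_pimg // in neCD *; exists (pimg a, pimg b) => //.
  rewrite PLadjE // in adj_ab; case/andP: adj_ab => _ meet_ab.
  by rewrite inE /= meet_ab andbT; apply: contraNneq neCD => ->.
case=> [[A B]]; rewrite inE /= => /andP [neAB meetAB] ->.
have nzA : A != set0 by apply: contraNneq meetAB => ->; rewrite set0I.
have nzB : B != set0 by apply: contraNneq meetAB => ->; rewrite setI0.
have vertex C : C != set0 -> Limg C \in SPverts n.
  by move=> nzC; apply/imsetP; exists (pid C); rewrite ?pid_nz.
rewrite inE; apply/existsP; exists (Limg A); rewrite vertex //=.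
apply/existsP; exists (Limg B); rewrite vertex //= eqxx /=.
rewrite /SPadj (inj_eq Limg_inj) neAB /=; apply/existsP; exists (pid A); rewrite pid_nz //=.
apply/existsP; exists (pid B); rewrite pid_nz //= !eqxx /=.
rewrite PLadjE ?pid_pinj // !pimg_pid meetAB andbT.
by apply: contraNneq neAB => /(congr1 pimg); rewrite !pimg_pid => ->.
Qed.

Lemma card_subsets : #|{: {set 'I_n}}| = 2 ^ n.
Proof. by rewrite -cardsT -powersetT card_powerset cardsT card_ord. Qed.

Lemma card_disjoint_pairs :
  #|[set p : {set 'I_n} * {set 'I_n} | p.1 :&: p.2 == set0]| = 3 ^ n.
Proof.
pose colour_classes (g : {ffun 'I_n -> option bool}) :=
  ([set x | g x == Some true], [set x | g x == Some false]).
have inj_classes : injective colour_classes.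
  move=> g g' [/setP eq1 /setP eq2]; apply/ffunP => x.
  by move: (eq1 x) (eq2 x); rewrite !inE; case: (g x) (g' x) => [[]|] [[]|].
suff -> : [set p | p.1 :&: p.2 == set0] = colour_classes @: setT.
  by rewrite card_imset // cardsT card_ffun card_option card_bool card_ord.
apply/setP => -[A B]; rewrite inE /=; apply/idP/imsetP => [/eqP disjAB | [g _ [-> ->]]].
  exists [ffun x => if x \in A then Some true else if x \in B then Some false else None] => //.
  congr pair; apply/setP => x; rewrite !inE ffunE; case Ax: (x \in A); case Bx: (x \in B) => //.
  by move/setP/(_ x): disjAB; rewrite !inE Ax Bx.
by apply/eqP/setP => x; rewrite !inE; case: (g x) => [[]|].
Qed.

Lemma card_overlap_pairs : #|overlap_pairs| + (2 ^ n).-1 + 3 ^ n = 4 ^ n.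
Proof.
pose meeting := [set p : {set 'I_n} * {set 'I_n} | p.1 :&: p.2 != set0].
have card_meeting : #|meeting| + 3 ^ n = 4 ^ n.
  rewrite -card_disjoint_pairs.
  have -> : [set p | p.1 :&: p.2 == set0] = ~: meeting by apply/setP => p; rewrite !inE negbK.
  by rewrite cardsC card_prod card_subsets -expnMn.
have diag_meeting : meeting :&: [set p | p.1 == p.2] = (fun A => (A, A)) @: [set~ set0].
  apply/setP => -[A B]; rewrite !inE /=; apply/andP/imsetP => [[nzAB /eqP eqAB] | [C]].
    by subst B; exists A; rewrite // !inE -[A]setIid.
  by rewrite !inE => nzC [-> ->]; rewrite setIid.
rewrite -card_meeting -(cardsID [set p | p.1 == p.2] meeting) diag_meeting.
rewrite card_imset ?cardsC1 ?card_subsets; last by move=> A B [].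
congr (_ + _); rewrite addnC; congr (_ + _); apply: eq_card => -[A B].
by rewrite !inE andbC.
Qed.

End PartialInjections.

Import GRing.Theory.
Local Open Scope ring_scope.

Theorem mainTheorem15 (n : nat) (hn : (1 <= n)%N) :
  (#|SPedges n|%:R : rat) =
    ((2%:R ^+ n - 1) ^+ 2 - (3%:R ^+ n - 2%:R ^+ n)) / 2%:R.
Proof.
have twice_edges : #|overlap_pairs n| = (2 * #|SPedges n|)%N.
  rewrite SPedgesE; apply: card_imset_set2; first exact: Limg_inj.
    by move=> p; rewrite inE => /andP[].
  by move=> p; rewrite !inE eq_sym setIC.
have := congr1 (fun m : nat => m%:R : rat) (card_overlap_pairs n).
rewrite twice_edges -subn1 -[4%N]/(2 * 2)%N expnMn !natrM !natrD natrB ?expn_gt0 // !natrX.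
move=> count; apply: (@mulIf _ 2%:R) => //; rewrite mulfVK //; lra.
Qed.
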